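(* Every 1-cell $f$ in $\mathcal{S}_+$ is isomorphic (in $\mathcal{S}_+$) to a minimal 1-cell $f'$.
   Context: $\mathcal{S}$ is the free symmetric monoidal bicategory on one object (objects generated from a generator and unit by tensor; 1-cells generated by associativity/unit 1-cells and braidings $R_{xy}$, $R^{\cdot}_{xy}$ under composition and tensor; 2-cells generated by all structural 2-cells, including the syllepsis $v_{xy}:R_{yx}R_{xy}\Rightarrow 1$, modulo the symmetric monoidal axioms). $\mathcal{S}_+$ is the sub-bicategory with all objects, the 1-cells containing no generating 1-cell $R^{\cdot}_{xy}$, and the 2-cells obtained by composing and tensoring generating 2-cells of $\mathcal{S}$ with source and target in $\mathcal{S}_+$. The free braided monoidal bicategory $\mathcal{B}$ on one object has the same objects and 1-cells as $\mathcal{S}$; the underlying braid of a 1-cell $f$ is $\rho(f)$, where $\rho:\mathcal{B}\to\mathbf{Br}$ is the strict braided monoidal functor to the braid groups (as a locally discrete braided monoidal bicategory) induced by the universal property. For 1-cells of $\mathcal{S}_+$ this is a positive braid (a word in the generators $\sigma_i$ without inverses). A positive braid, or a 1-cell of $\mathcal{S}_+$, is minimal if (its underlying braid has the property that) no two strands cross twice. *)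

From mathcomp Require Import all_boot.
From Stdlib Require Import Relations.Relation_Operators.
Set Implicit Arguments. Unset Strict Implicit. Unset Printing Implicit Defensive.

Inductive obj : Type := X | I | T (x y : obj).

(* Conventions:
   A x y z : (x ⊗ y) ⊗ z -> x ⊗ (y ⊗ z),  Ai x y z its adjoint pseudo-inverse;
   L x : I ⊗ x -> x,  Li x : x -> I ⊗ x;  Rr x : x ⊗ I -> x,  Ri x : x -> x ⊗ I;
   B x y = R_{xy} : x ⊗ y -> y ⊗ x;  Bi x y = R^._{xy} : y ⊗ x -> x ⊗ y;
   Comp g f = g ∘ f (first f, then g). *)
Inductive cell : Type :=
| Id (x : obj)
| Comp (g f : cell)
| Tens (f g : cell)
| A (x y z : obj) | Ai (x y z : obj)
| L (x : obj) | Li (x : obj)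
| Rr (x : obj) | Ri (x : obj)
| B (x y : obj) | Bi (x y : obj).

Inductive hom1 : cell -> obj -> obj -> Prop :=
| h_id x : hom1 (Id x) x x
| h_comp g f x y z : hom1 f x y -> hom1 g y z -> hom1 (Comp g f) x z
| h_tens f g x y x' y' : hom1 f x y -> hom1 g x' y' -> hom1 (Tens f g) (T x x') (T y y')
| h_A x y z : hom1 (A x y z) (T (T x y) z) (T x (T y z))
| h_Ai x y z : hom1 (Ai x y z) (T x (T y z)) (T (T x y) z)
| h_L x : hom1 (L x) (T I x) x
| h_Li x : hom1 (Li x) x (T I x)
| h_Rr x : hom1 (Rr x) (T x I) x
| h_Ri x : hom1 (Ri x) x (T x I)
| h_B x y : hom1 (B x y) (T x y) (T y x)
| h_Bi x y : hom1 (Bi x y) (T y x) (T x y).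

Fixpoint plus (f : cell) : bool :=
  match f with
  | Comp g f => plus g && plus f
  | Tens f g => plus f && plus g
  | Bi _ _ => false
  | _ => true
  end.

(* Generating (invertible) structural 2-cells of S, as pairs (source, target).
   Ill-typed instances are discarded later by requiring both sides to be
   well-typed 1-cells with the same source and target. *)
Inductive gen2 : cell -> cell -> Prop :=
| g_assoc h g f : gen2 (Comp h (Comp g f)) (Comp (Comp h g) f)
| g_lunit y f : gen2 (Comp (Id y) f) f
| g_runit x f : gen2 (Comp f (Id x)) f
| g_tcomp g f g' f' : gen2 (Comp (Tens g g') (Tens f f')) (Tens (Comp g f) (Comp g' f'))
| g_tid x y : gen2 (Tens (Id x) (Id y)) (Id (T x y))
| g_A1 x y z : gen2 (Comp (Ai x y z) (A x y z)) (Id (T (T x y) z))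
| g_A2 x y z : gen2 (Comp (A x y z) (Ai x y z)) (Id (T x (T y z)))
| g_L1 x : gen2 (Comp (Li x) (L x)) (Id (T I x))
| g_L2 x : gen2 (Comp (L x) (Li x)) (Id x)
| g_R1 x : gen2 (Comp (Ri x) (Rr x)) (Id (T x I))
| g_R2 x : gen2 (Comp (Rr x) (Ri x)) (Id x)
| g_B1 x y : gen2 (Comp (Bi x y) (B x y)) (Id (T x y))
| g_B2 x y : gen2 (Comp (B x y) (Bi x y)) (Id (T y x))
| g_Anat x y z x' y' z' f g h :
    gen2 (Comp (A x' y' z') (Tens (Tens f g) h)) (Comp (Tens f (Tens g h)) (A x y z))
| g_Ainat x y z x' y' z' f g h :
    gen2 (Comp (Ai x' y' z') (Tens f (Tens g h))) (Comp (Tens (Tens f g) h) (Ai x y z))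
| g_Lnat x y f : gen2 (Comp (L y) (Tens (Id I) f)) (Comp f (L x))
| g_Linat x y f : gen2 (Comp (Li y) f) (Comp (Tens (Id I) f) (Li x))
| g_Rnat x y f : gen2 (Comp (Rr y) (Tens f (Id I))) (Comp f (Rr x))
| g_Rinat x y f : gen2 (Comp (Ri y) f) (Comp (Tens f (Id I)) (Ri x))
| g_Bnat x y x' y' f g : gen2 (Comp (B x' y') (Tens f g)) (Comp (Tens g f) (B x y))
| g_Binat x y x' y' f g : gen2 (Comp (Bi x' y') (Tens g f)) (Comp (Tens f g) (Bi x y))
| g_pent w x y z :
    gen2 (Comp (A w x (T y z)) (A (T w x) y z))
         (Comp (Tens (Id w) (A x y z)) (Comp (A w (T x y) z) (Tens (A w x y) (Id z))))
| g_mu x y : gen2 (Comp (Tens (Id x) (L y)) (A x I y)) (Tens (Rr x) (Id y))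
| g_lam x y : gen2 (Comp (L (T x y)) (A I x y)) (Tens (L x) (Id y))
| g_rho x y : gen2 (Comp (Tens (Id x) (Rr y)) (A x y I)) (Rr (T x y))
| g_hex1 x y z :
    gen2 (B (T x y) z)
         (Comp (A z x y) (Comp (Tens (B x z) (Id y))
            (Comp (Ai x z y) (Comp (Tens (Id x) (B y z)) (A x y z)))))
| g_hex2 x y z :
    gen2 (B x (T y z))
         (Comp (Ai y z x) (Comp (Tens (Id y) (B x z))
            (Comp (A y x z) (Comp (Tens (B x y) (Id z)) (Ai x y z)))))
| g_BI1 x : gen2 (B I x) (Comp (Ri x) (L x))
| g_BI2 x : gen2 (B x I) (Comp (Li x) (Rr x))
| g_syl x y : gen2 (Comp (B y x) (B x y)) (Id (T x y)).

Inductive step : cell -> cell -> Prop :=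
| s_gen f g : gen2 f g -> step f g
| s_compl h f f' : step f f' -> step (Comp h f) (Comp h f')
| s_compr h f f' : step f f' -> step (Comp f h) (Comp f' h)
| s_tensl h f f' : step f f' -> step (Tens h f) (Tens h f')
| s_tensr h f f' : step f f' -> step (Tens f h) (Tens f' h).

Definition step_plus (f g : cell) : Prop :=
  (exists x y, hom1 f x y /\ hom1 g x y) /\ plus f /\ plus g /\ step f g.

Definition iso_plus (f g : cell) : Prop := clos_refl_sym_trans cell step_plus f g.

(* Braid words: (true, i) = sigma_i, (false, i) = sigma_i^{-1}, strands at
   positions i and i+1 (0-based); words read left to right in time. *)
Fixpoint width (x : obj) : nat :=
  match x with X => 1 | I => 0 | T x y => width x + width y end.

Fixpoint src (f : cell) : obj :=
  match f with
  | Id x => x | Comp _ f => src f | Tens f g => T (src f) (src g)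
  | A x y z => T (T x y) z | Ai x y z => T x (T y z)
  | L x => T I x | Li x => x | Rr x => T x I | Ri x => x
  | B x y => T x y | Bi x y => T y x
  end.

(* positive braid in which each of the first m strands crosses over the next n *)
Definition block (m n : nat) : seq (bool * nat) :=
  flatten [seq [seq (true, i + j) | j <- iota 0 n] | i <- rev (iota 0 m)].

Definition binv (w : seq (bool * nat)) : seq (bool * nat) :=
  rev [seq (~~ l.1, l.2) | l <- w].

Definition bshift (k : nat) (w : seq (bool * nat)) : seq (bool * nat) :=
  [seq (l.1, k + l.2) | l <- w].

Fixpoint rho (f : cell) : seq (bool * nat) :=
  match f with
  | Comp g f => rho f ++ rho g
  | Tens f g => rho f ++ bshift (width (src f)) (rho g)
  | B x y => block (width x) (width y)
  | Bi x y => binv (block (width x) (width y))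
  | _ => [::]
  end.

(* The unordered pairs of strands (labelled by initial position) crossing at
   each letter of the word, in order. *)
Fixpoint crossings (p : nat -> nat) (w : seq (bool * nat)) : seq (nat * nat) :=
  match w with
  | [::] => [::]
  | l :: w' =>
      let i := l.2 in
      (minn (p i) (p i.+1), maxn (p i) (p i.+1)) ::
      crossings (fun k => if k == i then p i.+1 else if k == i.+1 then p i else p k) w'
  end.

Definition positive (w : seq (bool * nat)) : bool := all (fun l => l.1) w.

Definition minimal (w : seq (bool * nat)) : bool :=
  positive w && uniq (crossings id w).

From mathcomp Require Import all_boot zify.
From Stdlib Require Import Relations.Relation_Operators Setoid Morphisms.
Set Implicit Arguments. Unset Strict Implicit. Unset Printing Implicit Defensive.

(* Every 1-cell of S_+ from x to y is isomorphic to one of the form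
   d_y ∘ σ_{i_1} ∘ ... ∘ σ_{i_k} ∘ n_x, where n_x : x -> X ⊗ (X ⊗ ... (X ⊗ I))
   and d_y are built from associators and unitors only, and σ_i braids the
   adjacent strands i and i+1 of X ⊗ (X ⊗ ... (X ⊗ I)): such cells are closed
   under composition and tensor, and the hexagon and unit 2-cells reduce every
   braiding to them.  The syllepsis gives σ_i σ_i ≅ 1, and the coherence 2-cells
   give the remaining Coxeter relations of the symmetric group, so the word can
   be rewritten into a canonical product of descending runs (a Lehmer code),
   in which no two strands cross twice. *)

Fixpoint tgt (f : cell) : obj :=
  match f with
  | Id x => x | Comp g _ => tgt g | Tens f g => T (tgt f) (tgt g)
  | A x y z => T x (T y z) | Ai x y z => T (T x y) z
  | L x => x | Li x => T I x | Rr x => x | Ri x => T x I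
  | B x y => T y x | Bi x y => T x y
  end.

Lemma hom1_src_tgt f x y : hom1 f x y -> x = src f /\ y = tgt f.
Proof.
elim=> //= {f x y}.
- by move=> g f x y z _ [-> ->] _ [_ ->].
- by move=> f g x y x' y' _ [-> ->] _ [-> ->].
Qed.

Lemma hom1_uniq f x y x' y' : hom1 f x y -> hom1 f x' y' -> x = x' /\ y = y'.
Proof. by move=> /hom1_src_tgt [-> ->] /hom1_src_tgt [-> ->]. Qed.

Definition phom f x y := hom1 f x y /\ plus f.

Lemma phom_comp_inv g f x z : phom (Comp g f) x z -> exists y, phom f x y /\ phom g y z.
Proof. case=> H /= /andP [pg pf]; inversion H; subst; by exists y. Qed.

Lemma phom_tens_inv f g x y : phom (Tens f g) x y ->
  exists a b a' b', [/\ x = T a a', y = T b b', phom f a b & phom g a' b'].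
Proof. case=> H /= /andP [pf pg]; inversion H; subst; by exists x0, y0, x', y'. Qed.

Lemma iso_plus_phom f g : iso_plus f g -> forall x y, phom f x y <-> phom g x y.
Proof.
elim=> {f g} [f g [[a [b [Ha Hb]]] [pf [pg _]]] x y| |f g _ IH x y|f g h _ IH1 _ IH2 x y] //.
- split=> [][H p]; [have [<- <-] := hom1_uniq Ha H | have [<- <-] := hom1_uniq Hb H]; by split.
- by rewrite IH.
- by rewrite IH1 IH2.
Qed.

Lemma iso_plus_lift (F : cell -> cell) x y x' y' :
  (forall f g, step f g -> step (F f) (F g)) ->
  (forall f, phom f x y -> phom (F f) x' y') ->
  forall f g, phom f x y -> iso_plus f g -> iso_plus (F f) (F g).
Proof.
move=> FS FP f g Hf Hfg; elim: Hfg Hf => {f g}.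
- move=> f g Hst Hf; apply: rst_step.
  have Hg : phom g x y by rewrite -(iso_plus_phom (@rst_step _ _ f g Hst)).
  case: Hst => _ [_ [_ st]].
  have [h1 p1] := FP _ Hf; have [h2 p2] := FP _ Hg.
  by split; [exists x', y' | split; [|split; [|exact: FS]]].
- by move=> *; apply: rst_refl.
- by move=> f g Hfg IH Hg; apply/rst_sym/IH; rewrite (iso_plus_phom Hfg).
- move=> f g h Hfg IH1 _ IH2 Hf; apply: rst_trans (IH1 Hf) (IH2 _).
  by rewrite -(iso_plus_phom Hfg).
Qed.

Record pcell (x y : obj) := PCell { pval : cell; pcellP : phom pval x y }.
Arguments PCell {x y} pval pcellP.
Arguments pval {x y} p.

Definition piso x y (f g : pcell x y) := iso_plus (pval f) (pval g).
Arguments piso {x y} f g.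
Infix "≡" := piso (at level 70).

#[export] Instance piso_equiv x y : Equivalence (@piso x y).
Proof.
split=> [f|f g|f g h]; [exact: rst_refl | exact: rst_sym | exact: rst_trans].
Qed.

#[export] Hint Extern 0 (piso _ _) => reflexivity : core.

Program Definition pid x : pcell x x := PCell (Id x) _.
Next Obligation. by split=> //; constructor. Qed.
Program Definition pcomp x y z (g : pcell y z) (f : pcell x y) : pcell x z :=
  PCell (Comp (pval g) (pval f)) _.
Next Obligation.
case: g f => g [Hg pg] [f [Hf pf]] /=; split; [exact: h_comp Hf Hg | by rewrite /= pg pf].
Qed.
Program Definition ptens x y x' y' (f : pcell x y) (g : pcell x' y') : pcell (T x x') (T y y') :=
  PCell (Tens (pval f) (pval g)) _.
Next Obligation.
case: g f => g [Hg pg] [f [Hf pf]] /=; split; [exact: h_tens Hf Hg | by rewrite /= pg pf].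
Qed.
Program Definition pA x y z : pcell (T (T x y) z) (T x (T y z)) := PCell (A x y z) _.
Next Obligation. by split=> //; constructor. Qed.
Program Definition pAi x y z : pcell (T x (T y z)) (T (T x y) z) := PCell (Ai x y z) _.
Next Obligation. by split=> //; constructor. Qed.
Program Definition pL x : pcell (T I x) x := PCell (L x) _.
Next Obligation. by split=> //; constructor. Qed.
Program Definition pLi x : pcell x (T I x) := PCell (Li x) _.
Next Obligation. by split=> //; constructor. Qed.
Program Definition pR x : pcell (T x I) x := PCell (Rr x) _.
Next Obligation. by split=> //; constructor. Qed.
Program Definition pRi x : pcell x (T x I) := PCell (Ri x) _.
Next Obligation. by split=> //; constructor. Qed.
Program Definition pB x y : pcell (T x y) (T y x) := PCell (B x y) _.
Next Obligation. by split=> //; constructor. Qed.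
Arguments pcomp {x y z} g f.
Arguments ptens {x y x' y'} f g.

Infix "∘" := pcomp (at level 40, left associativity).
Infix "⊗" := ptens (at level 35, right associativity).

#[export] Instance pcomp_proper x y z :
  Proper (@piso y z ==> @piso x y ==> @piso x z) (@pcomp x y z).
Proof.
move=> g g' Hg f f' Hf; apply: (@rst_trans _ _ _ (Comp (pval g) (pval f'))).
- apply: (@iso_plus_lift (Comp (pval g)) x y x z) (pcellP f) Hf.
  + by move=> *; apply: s_compl.
  + by move=> u Hu; exact: (pcellP (g ∘ PCell u Hu)).
- apply: (@iso_plus_lift (Comp^~ (pval f')) y z x z) (pcellP g) Hg.
  + by move=> *; apply: s_compr.
  + by move=> u Hu; exact: (pcellP (PCell u Hu ∘ f')).
Qed.

#[export] Instance ptens_proper x y x' y' :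
  Proper (@piso x y ==> @piso x' y' ==> @piso (T x x') (T y y')) (@ptens x y x' y').
Proof.
move=> f f' Hf g g' Hg; apply: (@rst_trans _ _ _ (Tens (pval f) (pval g'))).
- apply: (@iso_plus_lift (Tens (pval f)) x' y' (T x x') (T y y')) (pcellP g) Hg.
  + by move=> *; apply: s_tensl.
  + by move=> u Hu; exact: (pcellP (f ⊗ PCell u Hu)).
- apply: (@iso_plus_lift (Tens^~ (pval g')) x y (T x x') (T y y')) (pcellP f) Hf.
  + by move=> *; apply: s_tensr.
  + by move=> u Hu; exact: (pcellP (PCell u Hu ⊗ g')).
Qed.

Lemma piso_gen2 x y (f g : pcell x y) : gen2 (pval f) (pval g) -> f ≡ g.
Proof.
case: f g => f [Hf pf] [g [Hg pg]] /= H.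
by apply: rst_step; split; [exists x, y | do 2?split=> //; constructor].
Qed.

Lemma piso_eq x y (f g : pcell x y) : pval f = pval g -> f ≡ g.
Proof. by rewrite /piso => ->; apply: rst_refl. Qed.

Section Generators.
Implicit Types (x y z w : obj).

Lemma pcompA x y z w (h : pcell z w) (g : pcell y z) (f : pcell x y) : h ∘ (g ∘ f) ≡ h ∘ g ∘ f.
Proof. apply: piso_gen2; exact: g_assoc. Qed.
Lemma pcomp1l x y (f : pcell x y) : pid y ∘ f ≡ f.
Proof. apply: piso_gen2; exact: g_lunit. Qed.
Lemma pcomp1r x y (f : pcell x y) : f ∘ pid x ≡ f.
Proof. apply: piso_gen2; exact: g_runit. Qed.
Lemma pcomp_tens x y z x' y' z' (g : pcell y z) (f : pcell x y) (g' : pcell y' z') (f' : pcell x' y') :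
  (g ⊗ g') ∘ (f ⊗ f') ≡ (g ∘ f) ⊗ (g' ∘ f').
Proof. apply: piso_gen2; exact: g_tcomp. Qed.
Lemma ptens_id x y : pid x ⊗ pid y ≡ pid (T x y).
Proof. apply: piso_gen2; exact: g_tid. Qed.
Lemma pAiA x y z : pAi x y z ∘ pA x y z ≡ pid _.
Proof. apply: piso_gen2; exact: g_A1. Qed.
Lemma pAAi x y z : pA x y z ∘ pAi x y z ≡ pid _.
Proof. apply: piso_gen2; exact: g_A2. Qed.
Lemma pLiL x : pLi x ∘ pL x ≡ pid _.
Proof. apply: piso_gen2; exact: g_L1. Qed.
Lemma pLLi x : pL x ∘ pLi x ≡ pid _.
Proof. apply: piso_gen2; exact: g_L2. Qed.
Lemma pRiR x : pRi x ∘ pR x ≡ pid _.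
Proof. apply: piso_gen2; exact: g_R1. Qed.
Lemma pRRi x : pR x ∘ pRi x ≡ pid _.
Proof. apply: piso_gen2; exact: g_R2. Qed.
Lemma pA_nat x y z x' y' z' (f : pcell x x') (g : pcell y y') (h : pcell z z') :
  pA x' y' z' ∘ ((f ⊗ g) ⊗ h) ≡ (f ⊗ (g ⊗ h)) ∘ pA x y z.
Proof. apply: piso_gen2; exact: g_Anat. Qed.
Lemma pAi_nat x y z x' y' z' (f : pcell x x') (g : pcell y y') (h : pcell z z') :
  pAi x' y' z' ∘ (f ⊗ (g ⊗ h)) ≡ ((f ⊗ g) ⊗ h) ∘ pAi x y z.
Proof. apply: piso_gen2; exact: g_Ainat. Qed.
Lemma pL_nat x y (f : pcell x y) : pL y ∘ (pid I ⊗ f) ≡ f ∘ pL x.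
Proof. apply: piso_gen2; exact: g_Lnat. Qed.
Lemma pR_nat x y (f : pcell x y) : pR y ∘ (f ⊗ pid I) ≡ f ∘ pR x.
Proof. apply: piso_gen2; exact: g_Rnat. Qed.
Lemma pRi_nat x y (f : pcell x y) : pRi y ∘ f ≡ (f ⊗ pid I) ∘ pRi x.
Proof. apply: piso_gen2; exact: g_Rinat. Qed.
Lemma pB_nat x y x' y' (f : pcell x x') (g : pcell y y') : pB x' y' ∘ (f ⊗ g) ≡ (g ⊗ f) ∘ pB x y.
Proof. apply: piso_gen2; exact: g_Bnat. Qed.
Lemma pentagon w x y z : pA w x (T y z) ∘ pA (T w x) y z ≡
  (pid w ⊗ pA x y z) ∘ (pA w (T x y) z ∘ (pA w x y ⊗ pid z)).
Proof. apply: piso_gen2; exact: g_pent. Qed.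
Lemma triangle_mid x y : (pid x ⊗ pL y) ∘ pA x I y ≡ pR x ⊗ pid y.
Proof. apply: piso_gen2; exact: g_mu. Qed.
Lemma triangle_left x y : pL (T x y) ∘ pA I x y ≡ pL x ⊗ pid y.
Proof. apply: piso_gen2; exact: g_lam. Qed.
Lemma triangle_right x y : (pid x ⊗ pR y) ∘ pA x y I ≡ pR (T x y).
Proof. apply: piso_gen2; exact: g_rho. Qed.
Lemma hexagon_l x y z : pB (T x y) z ≡
  pA z x y ∘ ((pB x z ⊗ pid y) ∘ (pAi x z y ∘ ((pid x ⊗ pB y z) ∘ pA x y z))).
Proof. apply: piso_gen2; exact: g_hex1. Qed.
Lemma hexagon_r x y z : pB x (T y z) ≡
  pAi y z x ∘ ((pid y ⊗ pB x z) ∘ (pA y x z ∘ ((pB x y ⊗ pid z) ∘ pAi x y z))).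
Proof. apply: piso_gen2; exact: g_hex2. Qed.
Lemma pB_unit_l x : pB I x ≡ pRi x ∘ pL x.
Proof. apply: piso_gen2; exact: g_BI1. Qed.
Lemma pB_unit_r x : pB x I ≡ pLi x ∘ pR x.
Proof. apply: piso_gen2; exact: g_BI2. Qed.
Lemma syllepsis x y : pB y x ∘ pB x y ≡ pid _.
Proof. apply: piso_gen2; exact: g_syl. Qed.

End Generators.

Lemma pcomp_prefix x y z w (a : pcell y z) (b : pcell x y) (c : pcell x z) (k : pcell w x) :
  a ∘ b ≡ c -> a ∘ (b ∘ k) ≡ c ∘ k.
Proof. by move=> H; rewrite pcompA H. Qed.
Arguments pcomp_prefix {x y z w a b c k}.

Lemma pcomp_prefix3 x y z w v (a : pcell z w) (b : pcell y z) (c : pcell x y) (d : pcell x w)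
  (k : pcell v x) : a ∘ (b ∘ c) ≡ d -> a ∘ (b ∘ (c ∘ k)) ≡ d ∘ k.
Proof. by move=> H; rewrite (pcompA b) pcompA H. Qed.
Arguments pcomp_prefix3 {x y z w v a b c d k}.

Lemma ptens_factorl x y z x' y' (f : pcell x' y') (g : pcell y z) (h : pcell x y) :
  (g ∘ h) ⊗ f ≡ (g ⊗ pid y') ∘ (h ⊗ f).
Proof. by rewrite pcomp_tens pcomp1l. Qed.
Lemma ptens_factorr x y x' y' z' (f : pcell x y) (g : pcell y' z') (h : pcell x' y') :
  f ⊗ (g ∘ h) ≡ (pid y ⊗ g) ∘ (f ⊗ h).
Proof. by rewrite pcomp_tens pcomp1l. Qed.
Lemma ptens_compl x y z w (g : pcell y z) (f : pcell x y) :
  (g ∘ f) ⊗ pid w ≡ (g ⊗ pid w) ∘ (f ⊗ pid w).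
Proof. exact: ptens_factorl. Qed.
Lemma ptens_compr x y z w (g : pcell y z) (f : pcell x y) :
  pid w ⊗ (g ∘ f) ≡ (pid w ⊗ g) ∘ (pid w ⊗ f).
Proof. exact: ptens_factorr. Qed.
Lemma ptens_comp_idl x y z w (g : pcell y z) (f : pcell x y) :
  (g ⊗ pid w) ∘ (f ⊗ pid w) ≡ (g ∘ f) ⊗ pid w.
Proof. by rewrite ptens_compl. Qed.
Lemma ptens_comp_idr x y z w (g : pcell y z) (f : pcell x y) :
  (pid w ⊗ g) ∘ (pid w ⊗ f) ≡ pid w ⊗ (g ∘ f).
Proof. by rewrite ptens_compr. Qed.
Lemma ptens_split x y x' y' (f : pcell x y) (g : pcell x' y') :
  f ⊗ g ≡ (f ⊗ pid y') ∘ (pid x ⊗ g).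
Proof. by rewrite pcomp_tens pcomp1l pcomp1r. Qed.
Lemma ptens_swap x y x' y' (f : pcell x y) (g : pcell x' y') :
  (pid y ⊗ g) ∘ (f ⊗ pid x') ≡ (f ⊗ pid y') ∘ (pid x ⊗ g).
Proof. by rewrite !pcomp_tens !pcomp1l !pcomp1r. Qed.

Lemma piso_val x y x' y' (u v : pcell x y) (u' v' : pcell x' y') :
  pval u = pval u' -> pval v = pval v' -> u ≡ v -> u' ≡ v'.
Proof. by rewrite /piso => <- <-. Qed.

Lemma pcast_phom x y x' y' (ex : x = x') (ey : y = y') (f : pcell x y) : phom (pval f) x' y'.
Proof. by case: _ / ex; case: _ / ey; exact: pcellP. Qed.
Definition pcast x y x' y' (ex : x = x') (ey : y = y') (f : pcell x y) : pcell x' y' :=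
  PCell (pval f) (pcast_phom ex ey f).

#[export] Instance pcast_proper x y x' y' ex ey :
  Proper (@piso x y ==> @piso x' y') (@pcast x y x' y' ex ey).
Proof. by []. Qed.

Lemma ptens_unit_inj x y (f g : pcell x y) : f ⊗ pid I ≡ g ⊗ pid I -> f ≡ g.
Proof.
have E (u : pcell x y) : u ≡ pR y ∘ (u ⊗ pid I) ∘ pRi x by rewrite pR_nat -pcompA pRRi pcomp1r.
by move=> H; rewrite (E f) H -E.
Qed.

Lemma pL_I : pL I ≡ pR I.
Proof.
have LL : pid I ⊗ pL I ≡ pL (T I I).
  have : pLi I ∘ (pL I ∘ (pid I ⊗ pL I)) ≡ pLi I ∘ (pL I ∘ pL (T I I)) by rewrite pL_nat.
  by rewrite !pcompA pLiL !pcomp1l.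
by apply: ptens_unit_inj; rewrite -triangle_mid LL triangle_left.
Qed.

Lemma pentagon_inv w x y z : pAi (T w x) y z ∘ pAi w x (T y z) ≡
  (pAi w x y ⊗ pid z) ∘ (pAi w (T x y) z ∘ (pid w ⊗ pAi x y z)).
Proof.
set Y := (pAi w x y ⊗ pid z) ∘ (pAi w (T x y) z ∘ (pid w ⊗ pAi x y z)).
have XY : (pA w x (T y z) ∘ pA (T w x) y z) ∘ Y ≡ pid _.
  rewrite /Y pentagon -?pcompA (pcomp_prefix (ptens_comp_idl _ _ _)) pAAi ptens_id pcomp1l.
  by rewrite (pcomp_prefix (pAAi _ _ _)) pcomp1l -ptens_compr pAAi ptens_id.
transitivity (pAi (T w x) y z ∘ pAi w x (T y z) ∘ ((pA w x (T y z) ∘ pA (T w x) y z) ∘ Y)).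
  by rewrite XY pcomp1r.
by rewrite -?pcompA (pcomp_prefix (pAiA _ _ _)) pcomp1l (pcomp_prefix (pAiA _ _ _)) pcomp1l.
Qed.

Lemma pentagon_mixed w x y z : pA (T w x) y z ∘ (pAi w x y ⊗ pid z) ≡
  pAi w x (T y z) ∘ ((pid w ⊗ pA x y z) ∘ pA w (T x y) z).
Proof.
transitivity (pAi w x (T y z) ∘ (pA w x (T y z) ∘ (pA (T w x) y z ∘ (pAi w x y ⊗ pid z)))).
  by rewrite pcompA pAiA pcomp1l.
by rewrite (pcompA (pA w x _)) pentagon -?pcompA -ptens_compl pAAi ptens_id pcomp1r.
Qed.

Lemma triangle_right_inv x y : pAi x y I ∘ (pid x ⊗ pRi y) ≡ pRi (T x y).
Proof.
transitivity (pRi (T x y) ∘ pR (T x y) ∘ pAi x y I ∘ (pid x ⊗ pRi y)).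
  by rewrite pRiR pcomp1l.
rewrite -triangle_right -!pcompA (pcomp_prefix (pAAi _ _ _)) pcomp1l -ptens_compr pRRi ptens_id.
by rewrite pcomp1r.
Qed.

Fixpoint line (n : nat) : obj := if n is n'.+1 then T X (line n') else I.

Lemma line_inj : injective line.
Proof. by elim=> [|n IH] [|m] //= [] /IH ->. Qed.

Fixpoint line_cat m k : pcell (T (line m) (line k)) (line (m + k)) :=
  match m return pcell (T (line m) (line k)) (line (m + k)) with
  | 0 => pL (line k)
  | m'.+1 => (pid X ⊗ line_cat m' k) ∘ pA X (line m') (line k)
  end.

Fixpoint line_split m k : pcell (line (m + k)) (T (line m) (line k)) :=
  match m return pcell (line (m + k)) (T (line m) (line k)) with
  | 0 => pLi (line k)
  | m'.+1 => pAi X (line m') (line k) ∘ (pid X ⊗ line_split m' k)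
  end.

Lemma line_cat_split m k : line_cat m k ∘ line_split m k ≡ pid _.
Proof.
elim: m => [|m IH] /=; first exact: pLLi.
by rewrite -!pcompA (pcomp_prefix (pAAi _ _ _)) pcomp1l -ptens_compr IH ptens_id.
Qed.

Lemma line_split_cat m k : line_split m k ∘ line_cat m k ≡ pid _.
Proof.
elim: m => [|m IH] /=; first exact: pLiL.
by rewrite -!pcompA (pcomp_prefix (ptens_comp_idr _ _ _)) IH ptens_id pcomp1l pAiA.
Qed.

Lemma line_cat0 m : line_cat m 0 ≡ pcast (erefl _) (esym (congr1 line (addn0 m))) (pR (line m)).
Proof.
elim: m => [|m IH] /=; first by apply: (piso_val (u := pL I) (v := pR I)) => //; exact: pL_I.
rewrite IH.
apply: (piso_val (u := (pid X ⊗ pR (line m)) ∘ pA X (line m) I) (v := pR (T X (line m)))) => //.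
exact: triangle_right.
Qed.

Lemma line_catA a b c :
  line_cat a (b + c) ∘ (pid (line a) ⊗ line_cat b c) ∘ pA (line a) (line b) (line c) ≡
  pcast (erefl _) (congr1 line (esym (addnA a b c)))
    (line_cat (a + b) c ∘ (line_cat a b ⊗ pid (line c))).
Proof.
elim: a => [|a IH] /=.
  apply: (piso_val (u := pL (line (b + c)) ∘ (pid I ⊗ line_cat b c) ∘ pA I (line b) (line c))
                   (v := line_cat b c ∘ (pL (line b) ⊗ pid (line c)))) => //.
  by rewrite pL_nat -pcompA triangle_left.
rewrite -(ptens_id X (line a)) -!pcompA (pcomp_prefix (pA_nat _ _ _)) -!pcompA.
rewrite (pcomp_prefix (ptens_comp_idr _ _ _)) pentagon (pcomp_prefix (ptens_comp_idr _ _ _)) IH.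
rewrite (ptens_factorl (pid (line c)) (pid X ⊗ line_cat a b)) (pcomp_prefix (pA_nat _ _ _)).
by rewrite -!pcompA (pcomp_prefix (ptens_comp_idr _ _ _)); apply: piso_eq.
Qed.

Fixpoint to_line x : pcell x (line (width x)) :=
  match x return pcell x (line (width x)) with
  | X => pRi X
  | I => pid I
  | T a b => line_cat (width a) (width b) ∘ (to_line a ⊗ to_line b)
  end.

Fixpoint of_line x : pcell (line (width x)) x :=
  match x return pcell (line (width x)) x with
  | X => pR X
  | I => pid I
  | T a b => (of_line a ⊗ of_line b) ∘ line_split (width a) (width b)
  end.

Lemma of_to_line x : of_line x ∘ to_line x ≡ pid x.
Proof.
elim: x => [||a IHa b IHb] /=; [exact: pRRi | exact: pcomp1l |].
by rewrite -!pcompA (pcomp_prefix (line_split_cat _ _)) pcomp1l pcomp_tens IHa IHb ptens_id.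
Qed.

Lemma to_of_line x : to_line x ∘ of_line x ≡ pid _.
Proof.
elim: x => [||a IHa b IHb] /=; [exact: pRiR | exact: pcomp1l |].
rewrite -!pcompA (pcomp_prefix (pcomp_tens _ _ _ _)) IHa IHb ptens_id pcomp1l.
exact: line_cat_split.
Qed.

Lemma to_line_width x n (NX : pcell x (line n)) : pval NX = pval (to_line x) -> n = width x.
Proof.
case: NX => c [Hc _] /= e; subst c.
by have [_ /line_inj] := hom1_uniq Hc (proj1 (pcellP (to_line x))).
Qed.

Lemma of_line_width x n (DX : pcell (line n) x) : pval DX = pval (of_line x) -> n = width x.
Proof.
case: DX => c [Hc _] /= e; subst c.
by have [/line_inj] := hom1_uniq Hc (proj1 (pcellP (of_line x))).
Qed.

Lemma to_of_line_val x n (NX : pcell x (line n)) (DX : pcell (line n) x) :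
  pval NX = pval (to_line x) -> pval DX = pval (of_line x) -> NX ∘ DX ≡ pid _ /\ DX ∘ NX ≡ pid _.
Proof.
move=> e1 e2; have E := to_line_width e1; subst n.
split; [apply: (piso_val (u := to_line x ∘ of_line x) (v := pid _)) (to_of_line x)
       | apply: (piso_val (u := of_line x ∘ to_line x) (v := pid _)) (of_to_line x)];
  by rewrite //= e1 e2.
Qed.

Lemma to_line_pA x y z : to_line (T x (T y z)) ∘ pA x y z ≡
  pcast (erefl _) (congr1 line (esym (addnA _ _ _))) (to_line (T (T x y) z)).
Proof.
rewrite /= ptens_factorr -?pcompA -(pA_nat (to_line x) (to_line y) (to_line z)) !pcompA line_catA.
rewrite (ptens_factorl (to_line z) (line_cat _ _) (to_line x ⊗ to_line y)) pcompA.
exact: piso_eq.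
Qed.

Lemma pA_normal x y z : pA x y z ≡
  pcast (congr1 line (addnA _ _ _)) (erefl _) (of_line (T x (T y z))) ∘ to_line (T (T x y) z).
Proof.
transitivity (of_line (T x (T y z)) ∘ (to_line (T x (T y z)) ∘ pA x y z)).
  by rewrite pcompA of_to_line pcomp1l.
by rewrite to_line_pA; apply: piso_eq.
Qed.

Lemma pL_normal x : pL x ≡ of_line x ∘ to_line (T I x).
Proof. by rewrite /= pL_nat pcompA of_to_line pcomp1l. Qed.

Lemma pR_normal x :
  pR x ≡ pcast (congr1 line (esym (addn0 _))) (erefl _) (of_line x) ∘ to_line (T x I).
Proof.
rewrite /= line_cat0.
apply: (piso_val (u := pR x) (v := of_line x ∘ (pR (line (width x)) ∘ (to_line x ⊗ pid I)))) => //.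
by rewrite pR_nat pcompA of_to_line pcomp1l.
Qed.

Lemma to_line_XX : to_line (T X X) ≡ pid X ⊗ pRi X.
Proof. by rewrite /= triangle_mid pcomp_tens pRRi pcomp1l. Qed.

Lemma of_line_XX : of_line (T X X) ≡ pid X ⊗ pR X.
Proof.
transitivity (of_line (T X X) ∘ (to_line (T X X) ∘ (pid X ⊗ pR X))).
  by rewrite to_line_XX ptens_comp_idr pRiR ptens_id pcomp1r.
by rewrite pcompA of_to_line pcomp1l.
Qed.

(* Braids strands [i] and [i+1] of [line n]; junk value [pid] when [n < i + 2]. *)
Fixpoint psigma (i n : nat) {struct i} : pcell (line n) (line n) :=
  match i with
  | 0 => match n return pcell (line n) (line n) with
         | c.+2 => pA X X (line c) ∘ ((pB X X ⊗ pid (line c)) ∘ pAi X X (line c))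
         | n' => pid (line n') end
  | i'.+1 => match n return pcell (line n) (line n) with
         | n'.+1 => pid X ⊗ psigma i' n'
         | 0 => pid I end
  end.

Fixpoint pword n (w : seq nat) : pcell (line n) (line n) :=
  if w is i :: w' then pword n w' ∘ psigma i n else pid (line n).

Definition gen_word n (w : seq nat) := all (fun i => i.+2 <= n) w.

Lemma gen_word_cat n u v : gen_word n (u ++ v) = gen_word n u && gen_word n v.
Proof. exact: all_cat. Qed.

Lemma gen_word_shift m k u v :
  gen_word m u -> gen_word k v -> gen_word (m + k) (map (addn m) v ++ u).
Proof.
move=> /allP Hu /allP Hv; rewrite gen_word_cat; apply/andP; split; apply/allP.
- by move=> _ /mapP [j /Hv Hj ->] /=; lia.
- by move=> i /Hu /=; lia.
Qed.

Lemma pword_cat n u v : pword n (u ++ v) ≡ pword n v ∘ pword n u.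
Proof. by elim: u => [|i u IH] /=; rewrite ?pcomp1r // IH pcompA. Qed.

Lemma line_cat_sigmar m k j :
  line_cat m k ∘ (pid (line m) ⊗ psigma j k) ≡ psigma (m + j) (m + k) ∘ line_cat m k.
Proof.
elim: m => [|m IH] /=; first exact: pL_nat.
rewrite -(ptens_id X (line m)) -?pcompA pA_nat -?pcompA.
by rewrite (pcomp_prefix (ptens_comp_idr _ _ _)) IH ptens_compr pcompA.
Qed.

Lemma line_cat_sigmal m k i : i.+2 <= m ->
  line_cat m k ∘ (psigma i m ⊗ pid (line k)) ≡ psigma i (m + k) ∘ line_cat m k.
Proof.
elim: m i => [|m IH] [|i] //= Hi.
  case: m IH Hi => [|c] // _ _ /=.
  rewrite !ptens_compl ptens_compr -?pcompA.
  rewrite (pcomp_prefix3 (symmetry (pentagon _ _ _ _))) -?pcompA (pcomp_prefix (pA_nat _ _ _)).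
  rewrite ptens_id -?pcompA (pcomp_prefix (symmetry (pA_nat _ _ _))) -?pcompA.
  rewrite (ptens_id X X) (pcomp_prefix (ptens_swap _ _)) -?pcompA -(ptens_id X X).
  apply: pcomp_proper => //; apply: pcomp_proper => //.
  by rewrite pentagon_mixed -?pcompA (pcomp_prefix (symmetry (pAi_nat _ _ _))) -?pcompA.
rewrite -?pcompA pA_nat -?pcompA (pcomp_prefix (ptens_comp_idr _ _ _)) IH //.
by rewrite ptens_compr pcompA.
Qed.

Lemma line_cat_word m k u v : gen_word m u ->
  line_cat m k ∘ (pword m u ⊗ pword k v) ≡ pword (m + k) (map (addn m) v ++ u) ∘ line_cat m k.
Proof.
have Hl w : gen_word m w ->
    line_cat m k ∘ (pword m w ⊗ pid (line k)) ≡ pword (m + k) w ∘ line_cat m k.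
  elim: w => [|i w IH] /=; first by rewrite ptens_id pcomp1r pcomp1l.
  by case/andP=> Hi Hw; rewrite ptens_compl pcompA IH // -pcompA line_cat_sigmal // pcompA.
have Hr w : line_cat m k ∘ (pid (line m) ⊗ pword k w) ≡
    pword (m + k) (map (addn m) w) ∘ line_cat m k.
  elim: w => [|j w IH] /=; first by rewrite ptens_id pcomp1r pcomp1l.
  by rewrite ptens_compr pcompA IH -pcompA line_cat_sigmar pcompA.
by move=> Hu; rewrite ptens_split pcompA Hl // -pcompA Hr pcompA pword_cat.
Qed.

(* [NX] and [DY] are [to_line x] and [of_line y], retyped along
   [n = width x] and [n = width y]. *)
Definition decomposable x y (f : pcell x y) :=
  exists n w (NX : pcell x (line n)) (DY : pcell (line n) y),
  [/\ pval NX = pval (to_line x), pval DY = pval (of_line y), gen_word n w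
    & f ≡ DY ∘ pword n w ∘ NX].

Lemma decomposable_piso x y (f g : pcell x y) : f ≡ g -> decomposable f -> decomposable g.
Proof.
by move=> H [n [w [NX [DY [h1 h2 h3 h4]]]]]; exists n, w, NX, DY; split=> //; rewrite -H.
Qed.

Lemma decomposable_val x y (f g : pcell x y) : pval f = pval g -> decomposable g -> decomposable f.
Proof. by move=> e; apply/decomposable_piso/piso_eq. Qed.

Lemma decomposable_comp x y z (f : pcell x y) (g : pcell y z) :
  decomposable f -> decomposable g -> decomposable (g ∘ f).
Proof.
move=> [n [u [NX [DY [h1 h2 h3 h4]]]]] [n' [v [NY [DZ [k1 k2 k3 k4]]]]].
have E : n' = n by rewrite (to_line_width k1) (of_line_width h2).
subst n'; have [NYDY _] := to_of_line_val k1 h2.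
exists n, (u ++ v), NX, DZ; split=> //; first by rewrite gen_word_cat h3 k3.
rewrite h4 k4 pword_cat.
transitivity (DZ ∘ pword n v ∘ (NY ∘ DY) ∘ pword n u ∘ NX); first by rewrite !pcompA.
by rewrite NYDY pcomp1r !pcompA.
Qed.

Lemma decomposable_tens x y x' y' (f : pcell x y) (g : pcell x' y') :
  decomposable f -> decomposable g -> decomposable (f ⊗ g).
Proof.
move=> [m [u [NX [DY [h1 h2 h3 h4]]]]] [k [v [NX' [DY' [k1 k2 k3 k4]]]]].
exists (m + k), (map (addn m) v ++ u), (line_cat m k ∘ (NX ⊗ NX')),
  ((DY ⊗ DY') ∘ line_split m k); split.
- by rewrite /= h1 k1 (to_line_width h1) (to_line_width k1).
- by rewrite /= h2 k2 (of_line_width h2) (of_line_width k2).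
- exact: gen_word_shift.
rewrite h4 k4 -!pcomp_tens.
transitivity ((DY ⊗ DY') ∘ (line_split m k ∘ line_cat m k) ∘ (pword m u ⊗ pword k v) ∘ (NX ⊗ NX')).
  by rewrite line_split_cat pcomp1r.
by rewrite -!pcompA (pcompA (line_cat m k)) line_cat_word // !pcompA.
Qed.

Lemma decomposable_normal x y (f : pcell x y) n (NX : pcell x (line n)) (DY : pcell (line n) y) :
  pval NX = pval (to_line x) -> pval DY = pval (of_line y) -> f ≡ DY ∘ NX -> decomposable f.
Proof. by move=> h1 h2 h3; exists n, [::], NX, DY; split=> //=; rewrite pcomp1r. Qed.

Lemma decomposable_inv x y (f : pcell x y) (g : pcell y x) n (NX : pcell x (line n))
  (DY : pcell (line n) y) : pval NX = pval (to_line x) -> pval DY = pval (of_line y) ->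
  f ≡ DY ∘ NX -> f ∘ g ≡ pid y -> decomposable g.
Proof.
move=> h1 h2 h3 h4; have e := of_line_width h2; subst n.
set DX := pcast (congr1 line (esym (to_line_width h1))) (erefl x) (of_line x).
have [_ DXNX] : NX ∘ DX ≡ pid _ /\ DX ∘ NX ≡ pid _ by apply: to_of_line_val.
apply: (@decomposable_normal _ _ _ _ (to_line y) DX) => //.
transitivity (DX ∘ NX ∘ g); first by rewrite DXNX pcomp1l.
rewrite -pcompA; apply: pcomp_proper => //.
have [NYDY _] := to_of_line_val (erefl (pval (to_line y))) h2.
transitivity (to_line y ∘ DY ∘ NX ∘ g); first by rewrite NYDY pcomp1l.
by rewrite -(pcompA _ DY) -h3 -pcompA h4 pcomp1r.
Qed.

Lemma decomposable_id x : decomposable (pid x).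
Proof. exact: (decomposable_normal _ _ (symmetry (of_to_line x))). Qed.

Lemma decomposable_A x y z : decomposable (pA x y z).
Proof. exact: decomposable_normal (pA_normal x y z). Qed.

Lemma decomposable_Ai x y z : decomposable (pAi x y z).
Proof. exact: decomposable_inv (pA_normal x y z) (pAAi x y z). Qed.

Lemma decomposable_L x : decomposable (pL x).
Proof. exact: decomposable_normal (pL_normal x). Qed.

Lemma decomposable_Li x : decomposable (pLi x).
Proof. exact: decomposable_inv (pL_normal x) (pLLi x). Qed.

Lemma decomposable_R x : decomposable (pR x).
Proof. exact: decomposable_normal (pR_normal x). Qed.

Lemma decomposable_Ri x : decomposable (pRi x).
Proof. exact: decomposable_inv (pR_normal x) (pRRi x). Qed.

Lemma decomposable_BXX : decomposable (pB X X).
Proof.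
exists 2, [:: 0], (to_line (T X X)), (of_line (T X X)); split=> //.
rewrite to_line_XX of_line_XX /= pcomp1l -?pcompA triangle_right_inv -(pRi_nat (pB X X)).
by rewrite (pcomp_prefix (triangle_right _ _)) pcompA pRRi pcomp1l.
Qed.

#[local] Hint Resolve decomposable_comp decomposable_tens decomposable_id decomposable_A
  decomposable_Ai decomposable_L decomposable_Li decomposable_R decomposable_Ri : decomposable.

Lemma decomposable_B x y : decomposable (pB x y).
Proof.
elim: x y => [||a IHa b IHb] y.
- elim: y => [||a IHa b IHb]; first exact: decomposable_BXX.
    by apply: decomposable_piso (symmetry (pB_unit_r X)) _; auto with decomposable.
  by apply: decomposable_piso (symmetry (hexagon_r X a b)) _; auto 7 with decomposable.
- by apply: decomposable_piso (symmetry (pB_unit_l y)) _; auto with decomposable.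
by apply: decomposable_piso (symmetry (hexagon_l a b y)) _; auto 7 with decomposable.
Qed.

Lemma decomposable_all x y (f : pcell x y) : decomposable f.
Proof.
case: f => c; elim: c x y => [a|g IHg f IHf|f IHf g IHg|a b d|a b d|a|a|a|a|a b|a b] x y Hc;
  last by case: Hc.
- have [ex ey] := hom1_src_tgt (proj1 Hc); simpl in ex, ey; subst x y.
  exact: decomposable_val (decomposable_id a).
- have [m [Hf Hg]] := phom_comp_inv Hc.
  by apply: (decomposable_val (g := PCell g Hg ∘ PCell f Hf)) (decomposable_comp (IHf _ _ _) _).
- have [a [b [a' [b' [ex ey Hf Hg]]]]] := phom_tens_inv Hc; subst x y.
  by apply: (decomposable_val (g := PCell f Hf ⊗ PCell g Hg)) (decomposable_tens (IHf _ _ _) _).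
all: have [ex ey] := hom1_src_tgt (proj1 Hc); simpl in ex, ey; subst x y.
- exact: decomposable_val (decomposable_A a b d).
- exact: decomposable_val (decomposable_Ai a b d).
- exact: decomposable_val (decomposable_L a).
- exact: decomposable_val (decomposable_Li a).
- exact: decomposable_val (decomposable_R a).
- exact: decomposable_val (decomposable_Ri a).
- exact: decomposable_val (decomposable_B a b).
Qed.

Lemma psigma_involutive i n : i.+2 <= n -> psigma i n ∘ psigma i n ≡ pid _.
Proof.
elim: i n => [|i IH] [|[|n]] //= Hn.
  rewrite -?pcompA (pcomp_prefix (pAiA _ _ _)) pcomp1l (pcomp_prefix (ptens_comp_idl _ _ _)).
  by rewrite syllepsis ptens_id pcomp1l pAAi.
by rewrite ptens_comp_idr -ptens_id; apply: ptens_proper => //; exact: IH.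
Qed.

Lemma psigma_commute i j n : i.+2 <= j -> j.+2 <= n ->
  psigma j n ∘ psigma i n ≡ psigma i n ∘ psigma j n.
Proof.
elim: i j n => [|i IH] [|[|j]] [|[|n]] //= Hij Hjn.
  rewrite (pcomp_prefix (symmetry (pA_nat _ _ _))) -?pcompA.
  rewrite (ptens_id X X) (pcomp_prefix (ptens_swap _ _)) -?pcompA -(ptens_id X X).
  by rewrite -pAi_nat !pcompA.
by rewrite !ptens_comp_idr (IH j.+1 n.+1).
Qed.

Lemma piso_cancel_l x y (a : pcell x y) (a' : pcell y x) (u v : pcell x x) :
  a' ∘ a ≡ pid _ -> a ∘ u ≡ a ∘ v -> u ≡ v.
Proof. by move=> H E; rewrite -(pcomp1l u) -(pcomp1l v) -H -!pcompA E. Qed.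

Lemma conj_comp3 x y (a : pcell x y) (p q r : pcell x x) (P Q R : pcell y y) :
  a ∘ p ≡ P ∘ a -> a ∘ q ≡ Q ∘ a -> a ∘ r ≡ R ∘ a -> a ∘ (p ∘ q ∘ r) ≡ P ∘ Q ∘ R ∘ a.
Proof.
move=> Hp Hq Hr; rewrite !pcompA Hp -(pcompA P a q) Hq (pcompA P Q a).
by rewrite -(pcompA (P ∘ Q) a r) Hr pcompA.
Qed.

Lemma conj_braid x y (a : pcell x y) (a' : pcell y x) (u v : pcell x x) (U V : pcell y y) :
  a' ∘ a ≡ pid _ -> a ∘ u ≡ U ∘ a -> a ∘ v ≡ V ∘ a -> U ∘ V ∘ U ≡ V ∘ U ∘ V ->
  u ∘ v ∘ u ≡ v ∘ u ∘ v.
Proof.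
move=> H Hu Hv HU; apply: (piso_cancel_l H).
by rewrite (conj_comp3 Hu Hv Hu) (conj_comp3 Hv Hu Hv) HU.
Qed.

Section BraidRelation.
Variable c : obj.

(* The braid relation on [X ⊗ (X ⊗ (X ⊗ c))] is transported from
   [X ⊗ (X ⊗ X)], where it follows from the hexagon and naturality of the
   braiding. *)
Let b := pB X X.
Let s0 := pA X X (T X c) ∘ ((b ⊗ pid (T X c)) ∘ pAi X X (T X c)).
Let s1 := pid X ⊗ (pA X X c ∘ ((b ⊗ pid c) ∘ pAi X X c)).
Let t0 := pA X X X ∘ ((b ⊗ pid X) ∘ pAi X X X).
Let t1 := pid X ⊗ b.
Let regroup := pAi X (T X X) c ∘ (pid X ⊗ pAi X X c).
Let ungroup := (pid X ⊗ pA X X c) ∘ pA X (T X X) c.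

Lemma ungroup_regroup : ungroup ∘ regroup ≡ pid _.
Proof.
rewrite /regroup /ungroup -?pcompA (pcomp_prefix (pAAi _ _ _)) pcomp1l.
by rewrite ptens_comp_idr pAAi ptens_id.
Qed.

Lemma regroup_s1 : regroup ∘ s1 ≡ (t1 ⊗ pid c) ∘ regroup.
Proof.
rewrite /regroup /s1 /t1 -?pcompA ptens_comp_idr -?pcompA (pcomp_prefix (pAiA _ _ _)) pcomp1l.
by rewrite ptens_compr (pcomp_prefix (pAi_nat _ _ _)) !pcompA.
Qed.

Lemma regroup_s0 : regroup ∘ s0 ≡ (t0 ⊗ pid c) ∘ regroup.
Proof.
have E : regroup ≡ (pA X X X ⊗ pid c) ∘ (pAi (T X X) X c ∘ pAi X X (T X c)).
  by rewrite pentagon_inv /regroup -?pcompA (pcomp_prefix (ptens_comp_idl _ _ _)) pAAi ptens_id pcomp1l.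
rewrite E /s0 /t0 -?pcompA (pcomp_prefix (pAiA _ _ _)) pcomp1l.
rewrite -(ptens_id X c) (pcomp_prefix (pAi_nat _ _ _)) -?pcompA !ptens_compl -?pcompA.
by rewrite (pcomp_prefix (@ptens_comp_idl _ _ _ c (pAi X X X) (pA X X X))) pAiA ptens_id pcomp1l.
Qed.

Lemma braid_XXX : t0 ∘ t1 ∘ t0 ≡ t1 ∘ t0 ∘ t1.
Proof.
have H : pA X X X ∘ pB X (T X X) ≡ t1 ∘ t0.
  by rewrite hexagon_r /t1 /t0 -?pcompA (pcomp_prefix (pAAi _ _ _)) pcomp1l.
have H2 : t0 ∘ (pA X X X ∘ pB X (T X X)) ≡ t0 ∘ t1 ∘ t0 by rewrite H pcompA.
by rewrite -H2 -H /t1 -pcompA pB_nat /t0 -?pcompA (pcomp_prefix (pAiA _ _ _)) pcomp1l.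
Qed.

Lemma braid_XXXc : s0 ∘ s1 ∘ s0 ≡ s1 ∘ s0 ∘ s1.
Proof.
apply: (conj_braid ungroup_regroup regroup_s0 regroup_s1).
by rewrite !ptens_comp_idl braid_XXX.
Qed.

End BraidRelation.

Lemma psigma_braid i n : i.+3 <= n ->
  psigma i n ∘ psigma i.+1 n ∘ psigma i n ≡ psigma i.+1 n ∘ psigma i n ∘ psigma i.+1 n.
Proof.
elim: i n => [|i IH] [|[|[|n]]] //= Hn; first exact: (braid_XXXc (line n)).
by rewrite !ptens_comp_idr; apply: ptens_proper => //; exact: IH.
Qed.

Inductive cox_move (n : nat) : seq nat -> seq nat -> Prop :=
| cox_cancel u v i : i.+2 <= n -> cox_move n (u ++ i :: i :: v) (u ++ v)
| cox_commute u v i j : i.+2 <= j -> j.+2 <= n ->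
    cox_move n (u ++ i :: j :: v) (u ++ j :: i :: v)
| cox_braid u v i : i.+3 <= n ->
    cox_move n (u ++ [:: i, i.+1 & i :: v]) (u ++ [:: i.+1, i & i.+1 :: v]).

Definition cox_eq n := clos_refl_sym_trans _ (cox_move n).

#[export] Instance cox_eq_equiv n : Equivalence (cox_eq n).
Proof.
split=> [u|u v|u v w]; [exact: rst_refl | exact: rst_sym | exact: rst_trans].
Qed.

Lemma cox_eq_map (F : seq nat -> seq nat) m n :
  (forall u v, cox_move m u v -> cox_move n (F u) (F v)) ->
  forall u v, cox_eq m u v -> cox_eq n (F u) (F v).
Proof.
move=> FM u v; elim=> {u v} [u v /FM uv|u|u v _ IH|u v w _ IH1 _ IH2].
- exact: rst_step.
- reflexivity.
- by symmetry.
- by transitivity (F v).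
Qed.

Lemma cox_eq_catl n s u v : cox_eq n u v -> cox_eq n (s ++ u) (s ++ v).
Proof. by apply: cox_eq_map => {}u {}v [] *; rewrite !catA; constructor. Qed.

Lemma cox_eq_catr n s u v : cox_eq n u v -> cox_eq n (u ++ s) (v ++ s).
Proof. by apply: (@cox_eq_map (cat^~ s)) => {}u {}v [] *; rewrite -!catA; constructor. Qed.

Lemma cox_eq_widen m n u v : m <= n -> cox_eq m u v -> cox_eq n u v.
Proof.
by move=> mn; apply: (@cox_eq_map id) => {}u {}v [] *; constructor=> //; apply: leq_trans mn.
Qed.

Definition cox_far n i j := ((i.+2 <= j) && (j.+2 <= n)) || ((j.+2 <= i) && (i.+2 <= n)).

Lemma cox_eq_swap n i j v : cox_far n i j -> cox_eq n [:: i, j & v] [:: j, i & v].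
Proof.
case/orP=> /andP [ij jn]; first exact: rst_step (cox_commute [::] v ij jn).
by symmetry; exact: rst_step (cox_commute [::] v ij jn).
Qed.

Lemma cox_eq_pull n i s : (forall j, j \in s -> cox_far n i j) ->
  cox_eq n (s ++ [:: i]) (i :: s).
Proof.
elim: s => [|j s IH] Hs /=; first reflexivity.
transitivity (j :: i :: s); first by apply: (cox_eq_catl [:: j]) (IH _) => k ks; rewrite Hs ?inE ?ks ?orbT.
by apply: cox_eq_swap; rewrite /cox_far orbC; apply: Hs; rewrite mem_head.
Qed.

Fixpoint down k t := if t is t'.+1 then (k + t') :: down k t' else [::].

Lemma mem_down k t j : j \in down k t -> k <= j < k + t.
Proof. by elim: t => [|t IH] //=; rewrite inE => /orP [/eqP ->|/IH]; lia. Qed.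

Lemma down_uniq k t : uniq (down k t).
Proof. by elim: t => [|t IH] //=; rewrite IH andbT; apply/negP => /mem_down; lia. Qed.

Lemma downD k a b : down k (a + b) = down (k + b) a ++ down k b.
Proof. by elim: a => [|a IH] //=; rewrite IH; congr (_ :: _); lia. Qed.

Lemma down_rcons k t : down k t.+1 = down k.+1 t ++ [:: k].
Proof. by rewrite -(addn1 t) downD /= addn0 addn1. Qed.

Lemma down_push_below n k t i : i.+1 < k -> k + t < n ->
  cox_eq n (down k t ++ [:: i]) (i :: down k t).
Proof. by move=> ik ktn; apply: cox_eq_pull => j /mem_down Hj; rewrite /cox_far; lia. Qed.

Lemma down_push_inside n k t i : k < i -> i < k + t -> k + t < n ->
  cox_eq n (down k t ++ [:: i]) (i.-1 :: down k t).
Proof.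
move=> ki ikt ktn.
have -> : down k t = down i.+1 (k + t - i.+1) ++ [:: i, i.-1 & down k (i.-1 - k)].
  have Et : t = k + t - i.+1 + (2 + (i.-1 - k)) by lia.
  by rewrite {1}Et downD (downD k 2) /=; congr (down _ _ ++ _ :: _ :: _); lia.
set P := down i.+1 _; set Q := down k _.
have QiP : cox_eq n ([:: i; i.-1] ++ Q ++ [:: i]) [:: i, i.-1, i & Q].
  by apply: cox_eq_catl; apply: cox_eq_pull => j /mem_down Hj; rewrite /cox_far; lia.
have br : cox_eq n [:: i, i.-1, i & Q] [:: i.-1, i, i.-1 & Q].
  have -> : i = i.-1.+1 by lia.
  by symmetry; apply: rst_step (cox_braid [::] Q _); lia.
rewrite -catA; transitivity (P ++ [:: i, i.-1, i & Q]); first exact: cox_eq_catl QiP.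
transitivity (P ++ [:: i.-1, i, i.-1 & Q]); first exact: cox_eq_catl br.
have -> : P ++ [:: i.-1, i, i.-1 & Q] = (P ++ [:: i.-1]) ++ [:: i, i.-1 & Q] by rewrite -catA.
rewrite -cat_cons; apply: cox_eq_catr; apply: cox_eq_pull => j /mem_down Hj; rewrite /cox_far; lia.
Qed.

(* A Lehmer code [c = [:: k_m; ...; k_1; k_0]] with [k_s <= s] encodes the
   word that, for s = 0, 1, ..., m, moves the strand at position [s] down to
   position [k_s]. *)
Fixpoint code_word (c : seq nat) : seq nat :=
  if c is k :: c' then code_word c' ++ down k (size c' - k) else [::].

Fixpoint code_ok (c : seq nat) : bool :=
  if c is k :: c' then (k <= size c') && code_ok c' else true.

(* The code of [code_word c ++ [:: i]]. *)
Fixpoint code_push (c : seq nat) (i : nat) : seq nat :=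
  match c with
  | [::] => [::]
  | k :: c' => if i.+1 < k then k :: code_push c' i
               else if i.+1 == k then k.-1 :: c'
               else if i == k then k.+1 :: c'
               else k :: code_push c' i.-1
  end.

Lemma size_code_push c i : size (code_push c i) = size c.
Proof.
elim: c i => [|k c IH] i //=.
by case: ifP => _ /=; rewrite ?IH //; case: ifP => _ //=; case: ifP => _ //=; rewrite IH.
Qed.

Lemma code_ok_push c i : code_ok c -> i.+2 <= size c -> code_ok (code_push c i).
Proof.
elim: c i => [|k c IH] i //= /andP [kc okc] ic.
case: ifP => ik /=; first by rewrite size_code_push kc IH //; lia.
case: eqP => [ik1|ik1] /=; first by rewrite okc andbT; lia.
case: eqP => [ik2|ik2] /=; first by rewrite okc andbT; lia.
by rewrite size_code_push kc IH //; lia.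
Qed.

Lemma code_push_word c i : code_ok c -> i.+2 <= size c ->
  cox_eq (size c) (code_word c ++ [:: i]) (code_word (code_push c i)).
Proof.
elim: c i => [|k c IH] i //= /andP [kc okc] ic; set m := size c.
rewrite -catA; case: ifP => ik /=.
  transitivity (code_word c ++ i :: down k (m - k)).
    by apply: cox_eq_catl; apply: down_push_below; lia.
  rewrite size_code_push -cat1s catA; apply: cox_eq_catr; apply: (cox_eq_widen (leqnSn _)); apply: IH => //; lia.
have Em : m - i = (m - i.+1).+1 by lia.
case: eqP => [<-|ik1] /=; first by rewrite Em down_rcons; reflexivity.
case: eqP => [<-|ik2] /=.
  rewrite Em down_rcons -!catA catA; apply: rst_step.
  by have := @cox_cancel m.+1 (code_word c ++ down i.+1 (m - i.+1)) [::] i; rewrite cats0; apply; lia.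
transitivity (code_word c ++ i.-1 :: down k (m - k)).
  by apply: cox_eq_catl; apply: down_push_inside; lia.
rewrite size_code_push -cat1s catA; apply: cox_eq_catr; apply: (cox_eq_widen (leqnSn _)); apply: IH => //; lia.
Qed.

Lemma size_down k t : size (down k t) = t.
Proof. by elim: t => //= t ->. Qed.

Lemma code_ok_down0 n : code_ok (down 0 n).
Proof. by elim: n => //= n ->; rewrite size_down andbT. Qed.

Lemma code_word_down0 n : code_word (down 0 n) = [::].
Proof. by elim: n => //= n ->; rewrite size_down subnn. Qed.

(* The empty word has code [down 0 n] = [:: n-1; ...; 0]. *)
Definition canon_code n w := foldl code_push (down 0 n) w.

Lemma canon_code_ok n w : gen_word n w -> code_ok (canon_code n w) /\ size (canon_code n w) = n.
Proof.
elim/last_ind: w => [|w j IH]; first by rewrite code_ok_down0 size_down.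
rewrite /gen_word all_rcons /canon_code foldl_rcons => /andP [jn /IH [ok sz]].
by rewrite size_code_push sz; split=> //; apply: code_ok_push; rewrite ?sz.
Qed.

Lemma cox_eq_canon n w : gen_word n w -> cox_eq n w (code_word (canon_code n w)).
Proof.
elim/last_ind: w => [|w i IH]; first by rewrite /canon_code /= code_word_down0; reflexivity.
rewrite /gen_word all_rcons => /andP [i_n wn]; have [ok sz] := canon_code_ok wn.
rewrite /canon_code foldl_rcons -cats1.
transitivity (code_word (canon_code n w) ++ [:: i]); first exact: cox_eq_catr (IH wn).
by rewrite -{1}sz; apply: code_push_word; rewrite ?sz.
Qed.

Lemma gen_word_code c : code_ok c -> gen_word (size c) (code_word c).
Proof.
elim: c => [|k c IH] //= /andP [kc /IH okc].
rewrite gen_word_cat; apply/andP; split; apply/allP.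
- by move=> i /(allP okc) /=; lia.
- by move=> i /mem_down /=; lia.
Qed.

Definition transp i k := if k == i then i.+1 else if k == i.+1 then i else k.

(* The relabelling of strands performed by [crossings] at the letter [i]. *)
Definition swap_strands (p : nat -> nat) i k :=
  if k == i then p i.+1 else if k == i.+1 then p i else p k.

Fixpoint strands p (w : seq nat) :=
  if w is i :: w' then strands (swap_strands p i) w' else p.

Definition sigmas (w : seq nat) := [seq (true, i) | i <- w].

Lemma transpK i : involutive (transp i).
Proof. by move=> k; rewrite /transp; do ! case: eqP; lia. Qed.

Lemma swap_strandsE p i k : swap_strands p i k = p (transp i k).
Proof. by rewrite /swap_strands /transp; case: ifP => //; case: ifP. Qed.

Lemma strands_inj p w : injective p -> injective (strands p w).
Proof.
elim: w p => [|i w IH] p Hp //=; apply: IH => a b.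
by rewrite !swap_strandsE => /Hp /(can_inj (transpK i)).
Qed.

Lemma strands_cat p u v : strands p (u ++ v) = strands (strands p u) v.
Proof. by elim: u p => //= i u IH p. Qed.

Lemma crossings_cat p u v :
  crossings p (sigmas (u ++ v)) = crossings p (sigmas u) ++ crossings (strands p u) (sigmas v).
Proof. by elim: u p => //= i u IH p; rewrite IH. Qed.

Lemma strands_above p w s : (forall i, i \in w -> i.+1 < s) -> forall j, s <= j -> strands p w j = p j.
Proof.
elim: w p => [|i w IH] p //= Hw j sj.
rewrite IH //; last by move=> i' Hi'; apply: Hw; rewrite inE Hi' orbT.
have := Hw i (mem_head _ _); rewrite /swap_strands; case: eqP => [E|_]; first lia.
by case: eqP => [E|_] //; lia.
Qed.

Lemma inj_fix_above q s : injective q -> (forall j, s <= j -> q j = j) -> forall j, j < s -> q j < s.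
Proof. by move=> Hq Hf j js; rewrite ltnNge; apply/negP => /[dup] /Hf /Hq E; rewrite E; lia. Qed.

Lemma crossings_down k t p M : p (k + t) = M -> (forall j, j < k + t -> p j < M) ->
  crossings p (sigmas (down k t)) = [seq (p j, M) | j <- down k t].
Proof.
elim: t p => [|t IH] p //= pM pj.
have e : p (k + t).+1 = M by rewrite -addnS.
have lt : p (k + t) < M by apply: pj; lia.
rewrite e (minn_idPl (ltnW lt)) (maxn_idPr (ltnW lt)); congr (_ :: _).
have out j : j < k + t -> (j == k + t) = false /\ (j == (k + t).+1) = false.
  by split; apply/eqP; lia.
rewrite IH ?eqxx //.
  by apply/eq_in_map => j /mem_down jk; have [-> ->] := out j ltac:(lia).
by move=> j jk; have [-> ->] := out j jk; apply: pj; lia.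
Qed.

Lemma code_word_crossings c : code_ok c ->
  [/\ uniq (crossings id (sigmas (code_word c))),
      all (fun pr => pr.2 < size c) (crossings id (sigmas (code_word c))),
      injective (strands id (code_word c))
    & forall j, size c <= j -> strands id (code_word c) j = j].
Proof.
elim: c => [|k c IH] /=; first by split.
case/andP=> kc /IH [U Bd Inj Fix].
set m := size c; set q := strands id (code_word c).
have qm : q (k + (m - k)) = m by rewrite subnKC // /q Fix.
have qlt j : j < k + (m - k) -> q j < m by rewrite subnKC //; apply: inj_fix_above.
rewrite crossings_cat (crossings_down qm qlt); split.
- rewrite cat_uniq U /=; apply/andP; split.
    apply/hasPn => _ /mapP [j _ ->] /=; apply/negP => /(allP Bd) /=.
    by rewrite ltnn.
  by rewrite map_inj_uniq ?down_uniq // => a b [] /Inj.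
- rewrite all_cat; apply/andP; split; apply/allP.
    by move=> pr /(allP Bd) /=; lia.
  by move=> _ /mapP [j _ ->] /=.
- by rewrite strands_cat; apply: strands_inj.
move=> j mj; rewrite strands_cat (@strands_above _ _ m.+1) ?Fix //; first lia.
by move=> i /mem_down; lia.
Qed.

Lemma minimal_code_word c : code_ok c -> minimal (sigmas (code_word c)).
Proof.
case/code_word_crossings => U _ _ _; rewrite /minimal U andbT /positive /sigmas all_map.
exact/allP.
Qed.

Lemma pword_cox_eq n u v : cox_eq n u v -> pword n u ≡ pword n v.
Proof.
elim=> {u v} [u v []|u|u v _ IH|u v w _ IH1 _ IH2] //; last by rewrite IH1.
- move=> {}u {}v i i_n; rewrite !pword_cat; apply: pcomp_proper => //=.
  by rewrite -pcompA psigma_involutive // pcomp1r.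
- move=> {}u {}v i j ij jn; rewrite !pword_cat; apply: pcomp_proper => //=.
  by rewrite -!pcompA psigma_commute.
- move=> {}u {}v i i_n; rewrite !pword_cat; apply: pcomp_proper => //=.
  by rewrite -!pcompA (pcompA (psigma i n)) psigma_braid // !pcompA.
- by symmetry.
Qed.

Lemma rho_psigma i n : i.+2 <= n -> rho (pval (psigma i n)) = [:: (true, i)].
Proof. by elim: i n => [|i IH] [|[|n]] //= Hn; rewrite IH. Qed.

Lemma rho_pword n w : gen_word n w -> rho (pval (pword n w)) = sigmas w.
Proof. by elim: w => [|i w IH] //= /andP [i_n wn]; rewrite rho_psigma // IH. Qed.

Lemma rho_to_line x : rho (pval (to_line x)) = [::].
Proof.
have rho_cat m k : rho (pval (line_cat m k)) = [::] by elim: m => //= m ->.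
by elim: x => //= a -> b ->; rewrite rho_cat.
Qed.

Lemma rho_of_line x : rho (pval (of_line x)) = [::].
Proof.
have rho_split m k : rho (pval (line_split m k)) = [::] by elim: m => //= m ->.
by elim: x => //= a -> b ->; rewrite rho_split.
Qed.

Theorem proposition3p8 (f : cell) (x y : obj) :
  hom1 f x y -> plus f ->
  exists f' : cell, [/\ hom1 f' x y, plus f', minimal (rho f') & iso_plus f f'].
Proof.
move=> Hf Pf; pose F : pcell x y := PCell f (conj Hf Pf).
have [n [w [NX [DY [NXE DYE wn Fw]]]]] := decomposable_all F.
have [ok sz] := canon_code_ok wn.
pose F' := DY ∘ pword n (code_word (canon_code n w)) ∘ NX.
have [HF' PF'] := pcellP F'.
exists (pval F'); split=> //.
- rewrite /= NXE DYE rho_to_line rho_of_line rho_pword ?cats0; first exact: minimal_code_word.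
  by rewrite -{1}sz; apply: gen_word_code.
- have : F ≡ F' by rewrite Fw (pword_cox_eq (cox_eq_canon wn)).
  by [].
Qed.
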